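(* For every positive integer $t$ and every finite graph $G$ of degeneracy at most $t$, the hypergraph of closed neighborhoods in $G$ has a sample compression scheme of size $t+\lceil\log_2(t+1)\rceil+1$.
   Context: $G$ has degeneracy at most $t$ if there is a total order $\prec$ on $V(G)$ such that every vertex $v$ has at most $t$ neighbors $u$ with $u\prec v$. The hypergraph of closed neighborhoods in $G$ has vertex set $V(G)$ and hyperedges $B_G(c,1)=\{c\}\cup N_G(c)$ for $c\in V(G)$. For a hypergraph $H$ (finite $V(H)$, $E(H)\subseteq 2^{V(H)}$): a sample is a pair $(X^+,X^-)$ of subsets of $V(H)$ such that some hyperedge $e$ has $X^+\subseteq e$, $X^-\cap e=\emptyset$; $\mathcal{S}(H)$ is the set of samples; $S$ realizes $(X^+,X^-)$ if $X^+\subseteq S$, $S\cap X^-=\emptyset$; a subsample is a sample $(Y^+,Y^-)$ with $Y^\pm\subseteq X^\pm$, of size $|Y^+\cup Y^-|$. A sample compression scheme is $(\kappa,\rho)$ with $\kappa:\mathcal{S}(H)\to\mathcal{S}(H)\times\{0,1\}^*$ and $\rho:\mathcal{S}(H)\times\{0,1\}^*\to 2^{V(H)}$ such that for every sample the first component of $\kappa(X^+,X^-)$ is a subsample of it and $\rho(\kappa(X^+,X^-))$ realizes it; its size is $k_1+k_2$, $k_1$ the maximum subsample size and $k_2$ the maximum bitstring length output by $\kappa$. *)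

From mathcomp Require Import all_boot.
Set Implicit Arguments. Unset Strict Implicit. Unset Printing Implicit Defensive.

Definition simple_graph (T : finType) (e : rel T) : Prop :=
  symmetric e /\ irreflexive e.

Definition strict_total_order (T : finType) (lt : rel T) : Prop :=
  irreflexive lt /\ transitive lt /\ (forall u v, u != v -> lt u v || lt v u).

Definition degeneracy_le (T : finType) (e : rel T) (t : nat) : Prop :=
  exists lt : rel T, strict_total_order lt /\
    forall v : T, #|[set u | e u v & lt u v]| <= t.

Definition closed_nbhd (T : finType) (e : rel T) (c : T) : {set T} :=
  c |: [set u | e c u].

Definition closed_nbhd_hypergraph (T : finType) (e : rel T) : {set {set T}} :=
  [set closed_nbhd e c | c : T].

(* A hypergraph with vertex set T is given by its hyperedge set E. *)
Definition is_sample (T : finType) (E : {set {set T}}) (X : {set T} * {set T}) : bool :=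
  [exists S in E, (X.1 \subset S) && [disjoint X.2 & S]].

Definition realizes (T : finType) (S : {set T}) (X : {set T} * {set T}) : bool :=
  (X.1 \subset S) && [disjoint S & X.2].

Definition is_subsample (T : finType) (E : {set {set T}}) (Y X : {set T} * {set T}) : bool :=
  [&& is_sample E Y, Y.1 \subset X.1 & Y.2 \subset X.2].

Definition sample_size (T : finType) (Y : {set T} * {set T}) : nat := #|Y.1 :|: Y.2|.

(* compression and reconstruction maps (defined on all pairs; only their
   behaviour on samples matters) *)
Definition compressor (T : finType) := {set T} * {set T} -> ({set T} * {set T}) * seq bool.
Definition reconstructor (T : finType) := ({set T} * {set T}) * seq bool -> {set T}.

Definition is_compression_scheme (T : finType) (E : {set {set T}})
    (kappa : compressor T) (rho : reconstructor T) : Prop :=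
  forall X, is_sample E X ->
    is_subsample E (kappa X).1 X /\ realizes (rho (kappa X)) X.

Definition scheme_size (T : finType) (E : {set {set T}}) (kappa : compressor T) : nat :=
  (\max_(X | is_sample E X) sample_size (kappa X).1) +
  (\max_(X | is_sample E X) size (kappa X).2).

From mathcomp Require Import all_boot.
Set Implicit Arguments. Unset Strict Implicit. Unset Printing Implicit Defensive.

(* Order the vertices so that each has at most t earlier neighbours.  If a
   sample (X+, X-) is realized by N[c], either every vertex of X+ is an
   earlier neighbour of c, and then X+ itself (at most t vertices) is a
   realizing subsample, or some m in X+ is c or a later neighbour of c, and
   then c is m or an earlier neighbour of m: keeping m together with the
   position of c among these t + 1 candidates (ceil(log2(t+1)) bits) lets one
   rebuild N[c].  One more bit tells the two cases apart. *)

Fixpoint bits_of_nat (L i : nat) : seq bool :=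
  if L is L'.+1 then odd i :: bits_of_nat L' i./2 else [::].

Fixpoint nat_of_bits (bs : seq bool) : nat :=
  if bs is b :: bs' then b + (nat_of_bits bs').*2 else 0.

Lemma size_bits_of_nat L i : size (bits_of_nat L i) = L.
Proof. by elim: L i => [|L IHL] i //=; rewrite IHL. Qed.

Lemma bits_of_natK L i : i < 2 ^ L -> nat_of_bits (bits_of_nat L i) = i.
Proof.
elim: L i => [|L IHL] i /=; first by rewrite expn0; case: i.
by rewrite expnS mul2n -ltn_half_double => /IHL ->; rewrite odd_double_half.
Qed.

Lemma scheme_size_le (T : finType) (E : {set {set T}}) (kappa : compressor T)
    k1 k2 :
  (forall X, is_sample E X -> sample_size (kappa X).1 <= k1) ->
  (forall X, is_sample E X -> size (kappa X).2 <= k2) ->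
  scheme_size E kappa <= k1 + k2.
Proof. by move=> size1 size2; apply: leq_add; apply/bigmax_leqP. Qed.

Lemma is_sample_realized (T : finType) (E : {set {set T}}) X :
  is_sample E X = [exists S in E, realizes S X].
Proof. by apply: eq_existsb => S; rewrite /realizes disjoint_sym. Qed.

Lemma realizes_pos_sub (T : finType) (S A : {set T}) X :
  realizes S X -> A \subset X.1 -> realizes S (A, set0).
Proof.
rewrite /realizes /= => /andP[sX1S _] sAX1; rewrite (subset_trans sAX1 sX1S) /=.
by rewrite -setI_eq0 setI0.
Qed.

Section NeighbourhoodCompression.

Variables (T : finType) (e lt : rel T).

Lemma is_sample_nbhdP X :
  reflect (exists c, realizes (closed_nbhd e c) X)
          (is_sample (closed_nbhd_hypergraph e) X).
Proof.
rewrite is_sample_realized; apply: (iffP existsP) => [|[c realX]].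
  by case=> S /andP[/imsetP[c _ ->] realX]; exists c.
by exists (closed_nbhd e c); rewrite imset_f.
Qed.

Lemma nbhd_subsample c X (A : {set T}) :
  realizes (closed_nbhd e c) X -> A \subset X.1 ->
  is_subsample (closed_nbhd_hypergraph e) (A, set0) X.
Proof.
move=> realX sAX1; rewrite /is_subsample sAX1 sub0set !andbT.
by apply/is_sample_nbhdP; exists c; apply: realizes_pos_sub realX sAX1.
Qed.

Definition earlier_nbrs v := [set u | e u v & lt u v].

Definition center_candidates m := m :: enum (earlier_nbrs m).

Definition nbhd_center X := [pick c | realizes (closed_nbhd e c) X].

Definition nbhd_reconstruct : reconstructor T := fun Yb =>
  match Yb.2 with
  | [::] => set0
  | false :: _ => Yb.1.1
  | true :: bs =>
      if [pick m in Yb.1.1] is Some m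
      then closed_nbhd e (nth m (center_candidates m) (nat_of_bits bs))
      else set0
  end.

Hypothesis e_sym : symmetric e.
Hypothesis lt_total : forall u v, u != v -> lt u v || lt v u.

Lemma center_candidatesP c m :
  m \in closed_nbhd e c -> m \notin earlier_nbrs c -> c \in center_candidates m.
Proof.
rewrite !inE mem_enum; have [-> | m_neq_c] //= := eqVneq m c.
move=> e_cm; rewrite !inE e_sym e_cm /= => not_lt_mc; have := lt_total m_neq_c.
by rewrite (negbTE not_lt_mc).
Qed.

Variables t L : nat.
Hypothesis earlier_nbrs_le : forall v, #|earlier_nbrs v| <= t.
Hypothesis bits_enough : t < 2 ^ L.

Definition nbhd_compress : compressor T := fun X =>
  match nbhd_center X with
  | None => ((set0, set0), [::])
  | Some c =>
      if [pick m in X.1 | m \notin earlier_nbrs c] is Some m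
      then (([set m], set0),
            true :: bits_of_nat L (index c (center_candidates m)))
      else ((X.1, set0), [:: false])
  end.

Lemma nbhd_compress_scheme :
  is_compression_scheme (closed_nbhd_hypergraph e)
    nbhd_compress nbhd_reconstruct.
Proof.
move=> X /is_sample_nbhdP sampleX; rewrite /nbhd_compress /nbhd_center.
case: pickP => [c realX | no_center]; last first.
  by case: sampleX => c; rewrite no_center.
case: pickP => [m /andP[mX1 m_not_earlier] | all_earlier]; last first.
  split; first exact: nbhd_subsample realX _.
  move: realX; rewrite /realizes /= subxx => /andP[sX1N disjX].
  exact: disjointWl sX1N disjX.
split; first by apply: nbhd_subsample realX _; rewrite sub1set.
have c_cand : c \in center_candidates m.
  by apply: center_candidatesP m_not_earlier; case/andP: realX => /subsetP->.
have c_index : index c (center_candidates m) < 2 ^ L.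
  apply: (@leq_trans (size (center_candidates m))); first by rewrite index_mem.
  by rewrite /= -cardE; apply: leq_ltn_trans (earlier_nbrs_le m) bits_enough.
by rewrite /nbhd_reconstruct /= pick_set1 bits_of_natK // nth_index.
Qed.

Lemma nbhd_compress_sample_size X :
  0 < t -> sample_size (nbhd_compress X).1 <= t.
Proof.
move=> t_gt0; rewrite /nbhd_compress /sample_size.
case: (nbhd_center X) => [c|]; last by rewrite setU0 cards0.
case: pickP => [m _ | all_earlier]; first by rewrite /= setU0 cards1.
rewrite /= setU0; apply: leq_trans (earlier_nbrs_le c).
apply/subset_leq_card/subsetP => x x_X1.
by have := all_earlier x; rewrite x_X1 => /negbFE.
Qed.

Lemma nbhd_compress_bits_size X : size (nbhd_compress X).2 <= L.+1.
Proof.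
rewrite /nbhd_compress; case: (nbhd_center X) => [c|] //.
by case: pickP => [m _ | _] //=; rewrite size_bits_of_nat.
Qed.

End NeighbourhoodCompression.

Theorem theorem1p5 (t : nat) (T : finType) (e : rel T) :
  0 < t -> simple_graph e -> degeneracy_le e t ->
  exists (kappa : compressor T) (rho : reconstructor T),
    is_compression_scheme (closed_nbhd_hypergraph e) kappa rho /\
    scheme_size (closed_nbhd_hypergraph e) kappa <= t + up_log 2 t.+1 + 1.
Proof.
move=> t_gt0 [e_sym _] [lt [[_ [_ lt_total]] earlier_le]].
have bits_enough : t < 2 ^ up_log 2 t.+1 by apply: up_logP.
exists (nbhd_compress e lt (up_log 2 t.+1)), (nbhd_reconstruct e lt); split.
  exact: (nbhd_compress_scheme e_sym lt_total earlier_le bits_enough).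
rewrite -addnA addn1; apply: scheme_size_le => X _.
  exact: nbhd_compress_sample_size _ earlier_le X t_gt0.
exact: nbhd_compress_bits_size.
Qed.
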